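(* Let $x$ be a Sturmian word. For every integer $k>1$ and every position $j$ of $x$, there is a factor of $x$ starting at position $j$ that is a $k$-anti-power.
   Context: A Sturmian word is an infinite word having exactly $n+1$ distinct factors of length $n$ for every $n\in\mathbb{N}$. A factor is a contiguous subword. A $k$-anti-power is a word $w=w_1\cdots w_k$ with $|w_1|=\cdots=|w_k|\ge1$ and $w_1,\dots,w_k$ pairwise distinct. *)

From mathcomp Require Import all_boot.
Set Implicit Arguments. Unset Strict Implicit. Unset Printing Implicit Defensive.

Definition infword (T : Type) := nat -> T.

Definition factor (T : Type) (x : infword T) (i n : nat) : seq T :=
  mkseq (fun k => x (i + k)) n.

Definition is_factor_of_length (T : Type) (x : infword T) (n : nat) (w : seq T) : Prop :=
  exists i, w = factor x i n.

Definition has_n_factors (T : eqType) (x : infword T) (n c : nat) : Prop :=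
  exists s : seq (seq T),
    [/\ uniq s, size s = c &
        forall w, w \in s <-> is_factor_of_length x n w].

Definition sturmian (T : eqType) (x : infword T) : Prop :=
  forall n : nat, has_n_factors x n n.+1.

(* w = w_1 ... w_k with |w_1| = ... = |w_k| = m >= 1 and the w_i pairwise
   distinct; the i-th block (0-indexed) is take m (drop (i*m) w). *)
Definition anti_power (T : eqType) (k : nat) (w : seq T) : Prop :=
  exists m : nat,
    [/\ 0 < m, size w = k * m &
        uniq [seq take m (drop (i * m) w) | i <- iota 0 k]].

(* Read through the indicator of its first letter, x becomes a binary word z with the same
   pattern of equal letters and with n + 1 factors of each length n.  Such a word is
   balanced: a minimal unbalanced pair of windows has the form a w a, b w b, and walking the
   Rauzy graph from the unique right special factor of length |w| + 1 shows that both
   windows are rotations of one period, hence have the same weight.  Balance yields a slope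
   alpha with |weight z a L - L alpha| <= 1, and alpha is irrational because z is not
   eventually periodic.  Let e = 1/(2k).  Dirichlet gives t alpha within e of an integer c
   (above it, after passing to the complementary word if needed), and a multiple m of t has
   m alpha in N + [e, 2e), so that c' m alpha stays at distance >= e from the integers for
   0 < c' < k.  If two of the k blocks of length m starting at j were equal, at distance
   d = c' m, every window of length d starting in the first block would have the same
   weight; comparing with a window of length t and weight c + 1 forces
   |weight - d alpha| <= t alpha - c < e, a contradiction. *)

From Stdlib Require Import Classical Reals Lra.
From mathcomp Require Import all_boot zify.
Set Implicit Arguments. Unset Strict Implicit. Unset Printing Implicit Defensive.

Section Factors.
Variables (T : eqType) (y : infword T).

Lemma size_factor a n : size (factor y a n) = n.
Proof. exact: size_mkseq. Qed.

Lemma factorD a m n : factor y a (m + n) = factor y a m ++ factor y (a + m) n.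
Proof.
rewrite /factor /mkseq iotaD map_cat add0n; congr (_ ++ _).
rewrite -[in iota m n](addn0 m) iotaDl -map_comp.
by apply: eq_map => i /=; rewrite addnA.
Qed.

Lemma factor_rcons a n : factor y a n.+1 = rcons (factor y a n) (y (a + n)).
Proof. by rewrite -addn1 factorD cats1 /factor /= addn0. Qed.

Lemma factor_cons a n : factor y a n.+1 = y a :: factor y a.+1 n.
Proof. by rewrite -add1n factorD /factor /= addn0 addn1. Qed.

Lemma take_factor a m n : m <= n -> take m (factor y a n) = factor y a m.
Proof.
by move/subnKC <-; rewrite factorD take_size_cat ?size_factor.
Qed.

Lemma drop_factor a m n : drop m (factor y a n) = factor y (a + m) (n - m).
Proof.
case: (leqP m n) => [/subnKC {1}<-|/ltnW mn].
  by rewrite factorD drop_size_cat ?size_factor.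
by rewrite drop_oversize ?size_factor // (eqP mn).
Qed.

Lemma eq_factorP a b n :
  factor y a n = factor y b n <-> (forall i, i < n -> y (a + i) = y (b + i)).
Proof.
split=> [E i lt_in | E].
  by have := congr1 (nth (y 0) ^~ i) E; rewrite /factor !nth_mkseq.
apply: (@eq_from_nth _ (y 0)); rewrite ?size_factor // => i lt_in.
by rewrite /factor !nth_mkseq ?E.
Qed.

Lemma eq_factor_rcons a b n :
  factor y a n.+1 = factor y b n.+1 <->
  factor y a n = factor y b n /\ y (a + n) = y (b + n).
Proof.
by rewrite !factor_rcons; split=> [/rcons_inj[-> ->] | [-> ->]].
Qed.

Lemma eq_factor_behead a b n :
  factor y a n.+1 = factor y b n.+1 -> factor y a.+1 n = factor y b.+1 n.
Proof. by rewrite !factor_cons => -[]. Qed.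

Lemma eq_factor_next a b n :
  factor y a n = factor y b n -> y (a + n) = y (b + n) ->
  factor y a.+1 n = factor y b.+1 n.
Proof. by move=> Eab Enext; apply/eq_factor_behead/eq_factor_rcons. Qed.

End Factors.

Definition same_pattern (T1 T2 : Type) (y1 : infword T1) (y2 : infword T2) :=
  forall i j, y1 i = y1 j <-> y2 i = y2 j.

Lemma eq_factor_pattern (T1 T2 : eqType) (y1 : infword T1) (y2 : infword T2) :
  same_pattern y1 y2 ->
  forall a b n, factor y1 a n = factor y1 b n <-> factor y2 a n = factor y2 b n.
Proof.
by move=> y12 a b n; rewrite !eq_factorP; split=> E i lt_in; apply/y12/E.
Qed.

Lemma uniq_map_inj_in (A B : eqType) (f : A -> B) (s : seq A) :
  uniq (map f s) -> {in s &, injective f}.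
Proof.
elim: s => //= c s IHs /andP[fc_notin Us] a b; rewrite !inE.
case/predU1P=> [->|As] /predU1P[->|Bs] Efab //.
- by move: fc_notin; rewrite Efab map_f.
- by move: fc_notin; rewrite -Efab map_f.
- exact: IHs.
Qed.

Lemma uniq_map_equiv (A B C : eqType) (f : A -> B) (g : A -> C) (s : seq A) :
  (forall a b, f a = f b <-> g a = g b) -> uniq (map f s) = uniq (map g s).
Proof.
move=> fg; elim: s => //= c s ->; congr (~~ _ && _).
by apply/mapP/mapP => -[d ds E]; exists d => //; apply/fg.
Qed.

Lemma pigeonhole_iota (A : eqType) (f : nat -> A) m n :
  ~~ uniq [seq f i | i <- iota m n] ->
  exists i j, [/\ m <= i, i < j, j < m + n & f i = f j].
Proof.
case/(uniqPn (f 0)) => i [j [ij]]; rewrite size_map size_iota => jn.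
rewrite !(nth_map 0) ?size_iota ?(ltn_trans ij) // !nth_iota ?(ltn_trans ij) //.
by exists (m + i), (m + j); split; rewrite ?leq_addr ?ltn_add2l.
Qed.

Definition complexity_succ (T : eqType) (y : infword T) :=
  forall n, (forall ps, uniq [seq factor y i n | i <- ps] -> size ps <= n.+1) /\
            exists2 ps, size ps = n.+1 & uniq [seq factor y i n | i <- ps].

Lemma sturmian_complexity_succ (T : eqType) (x : infword T) :
  sturmian x -> complexity_succ x.
Proof.
move=> sx n; have [s [Us size_s s_factors]] := sx n; split.
  move=> ps Ups; rewrite -(size_map (factor x ^~ n)) -size_s.
  by apply: uniq_leq_size => // _ /mapP[i _ ->]; apply/s_factors; exists i.
have [ps Eps] : exists ps, [seq factor x i n | i <- ps] = s.
  have: {subset s <= s} by [].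
  elim: {-2}s => [|w s' IHs'] s'_sub; first by exists [::].
  have [i ->] := (s_factors w).1 (s'_sub w (mem_head _ _)).
  have [ps <-] : exists ps, [seq factor x i n | i <- ps] = s'.
    by apply: IHs' => u us; apply: s'_sub; rewrite inE us orbT.
  by exists (i :: ps).
by exists ps; rewrite ?Eps // -size_s -Eps size_map.
Qed.

Lemma complexity_succ_pattern (T1 T2 : eqType) (y1 : infword T1) (y2 : infword T2) :
  same_pattern y1 y2 -> complexity_succ y1 -> complexity_succ y2.
Proof.
move=> /eq_factor_pattern y12 hy1 n; have [le_y1 [ps size_ps Ups]] := hy1 n.
have E := uniq_map_equiv _ (fun a b => y12 a b n).
split=> [qs|]; first by rewrite -E; apply: le_y1.
by exists ps; rewrite -?E.
Qed.

Lemma complexity_succ_two_letters (T : eqType) (y : infword T) :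
  complexity_succ y -> same_pattern y (fun i => y i == y 0).
Proof.
move=> hy i j; split=> [-> // | Eij]; have [le_y _] := hy 1.
case: (eqVneq (y i) (y 0)) Eij => [-> | ne_i]; case: (eqVneq (y j) (y 0)) => [-> | ne_j] //= _.
apply/eqP; apply: contraT => ne_ij; have := le_y [:: i; j; 0].
rewrite /= /factor /mkseq /= !addn0 !inE !eqseq_cons !andbT negb_or ne_ij ne_i ne_j.
by move=> /(_ isT).
Qed.

Definition eventually_periodic (T : Type) (y : infword T) :=
  exists P d, 0 < d /\ forall i, P <= i -> y (i + d) = y i.

Definition right_special (T : eqType) (y : infword T) n a :=
  exists2 e, factor y e n = factor y a n & y (e + n) != y (a + n).

Section ComplexitySucc.
Variables (T : eqType) (y : infword T).
Hypothesis hy : complexity_succ y.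

(* Every factor of length [P + d] already occurs at a position below [P + d]. *)
Lemma complexity_succ_aperiodic : ~ eventually_periodic y.
Proof.
case=> P [d [d_gt0 yper]]; have [le_y [ps size_ps Ups]] := hy (P + d).
have yperK k i : P <= i -> y (i + k * d) = y i.
  move=> Pi; elim: k => [|k IHk]; first by rewrite addn0.
  by rewrite mulSn addnCA addnC yper // (leq_trans Pi) ?leq_addr.
pose r a := if a < P then a else P + (a - P) %% d.
have factor_r : factor y ^~ (P + d) =1 factor y ^~ (P + d) \o r.
  move=> a; apply/eq_factorP => i _; rewrite /r; case: ltnP => // Pa.
  have -> : a + i = P + (a - P) %% d + i + (a - P) %/ d * d.
    by have := divn_eq (a - P) d; lia.
  by rewrite yperK // -addnA leq_addr.
have : size (map r ps) <= size (iota 0 (P + d)).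
  apply: uniq_leq_size => [|_ /mapP[a _ ->]].
    by move: Ups; rewrite (eq_map factor_r) map_comp => /map_uniq.
  rewrite mem_iota /r; case: ltnP => [Pa|_]; first by lia.
  by rewrite add0n ltn_add2l ltn_pmod.
by rewrite size_map size_iota size_ps ltnn.
Qed.

Lemma factor_covered n ps a :
  size ps = n.+1 -> uniq [seq factor y i n | i <- ps] ->
  exists2 c, c \in ps & factor y c n = factor y a n.
Proof.
move=> size_ps Ups; have [le_y _] := hy n.
case: (boolP (factor y a n \in [seq factor y i n | i <- ps])) => [/mapP[c cs ->]|a_new].
  by exists c.
by have := le_y (a :: ps); rewrite /= a_new Ups size_ps ltnn => /(_ isT).
Qed.

Lemma right_special_after N n : exists a b,
  [/\ N <= a, N <= b, factor y a n = factor y b n & y (a + n) != y (b + n)].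
Proof.
apply: NNPP => no_special; apply: complexity_succ_aperiodic.
have next_eq a b : N <= a -> N <= b -> factor y a n = factor y b n ->
    y (a + n) = y (b + n).
  by move=> Na Nb Eab; apply/eqP/negPn/negP => neq; apply: no_special; exists a, b.
have [le_y _] := hy n.
have [i [j [Ni ij jN Eij]]] : exists i j,
    [/\ N <= i, i < j, j < N + n.+2 & factor y i n = factor y j n].
  by apply: pigeonhole_iota; apply/negP => /le_y; rewrite size_iota ltnn.
have Eshift t : factor y (i + t) n = factor y (j + t) n.
  elim: t => [|t IHt]; first by rewrite !addn0.
  by rewrite !addnS; apply: eq_factor_next => //; apply: next_eq => //; lia.
exists (i + n), (j - i); split=> [|k ink]; first by rewrite subn_gt0.
have := next_eq (i + (k - i - n)) (j + (k - i - n)) ltac:(lia) ltac:(lia) (Eshift _).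
have -> : i + (k - i - n) + n = k by lia.
by have -> : j + (k - i - n) + n = k + (j - i) by lia.
Qed.

Lemma right_special_eq n a c :
  factor y c n = factor y a n -> right_special y n a -> right_special y n c.
Proof.
move=> Eca [e Eea ne_ea]; case: (eqVneq (y (e + n)) (y (c + n))) => [Eec|]; last first.
  by exists e; rewrite // Eea.
by exists a; rewrite // -Eec eq_sym.
Qed.

Lemma uniq_factor_succ n ps :
  uniq [seq factor y i n | i <- ps] -> uniq [seq factor y i n.+1 | i <- ps].
Proof.
move=> Ups; apply: (@map_uniq _ _ (take n)); rewrite -map_comp.
by under eq_map => i do rewrite /= (take_factor _ _ (leqnSn n)).
Qed.

Lemma factor_extend_notin n ps c e :
  uniq [seq factor y i n | i <- ps] -> c \in ps ->
  factor y e n = factor y c n -> y (e + n) != y (c + n) ->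
  factor y e n.+1 \notin [seq factor y i n.+1 | i <- ps].
Proof.
move=> Ups cps Eec ne_ec; apply/mapP => -[c' c'ps /eq_factor_rcons[Eec' Enext]].
have Ecc' := uniq_map_inj_in Ups cps c'ps (etrans (esym Eec) Eec').
by move: ne_ec; rewrite Enext Ecc' eqxx.
Qed.

Lemma right_special_unique n a b :
  right_special y n a -> right_special y n b -> factor y a n = factor y b n.
Proof.
move=> RSa RSb; apply/eqP/negPn/negP => ne_ab.
have [_ [ps size_ps Ups]] := hy n; have [le_y _] := hy n.+1.
have [ca ca_ps Eca] := factor_covered a size_ps Ups.
have [cb cb_ps Ecb] := factor_covered b size_ps Ups.
have [ea Eea ne_ea] := right_special_eq Eca RSa.
have [eb Eeb ne_eb] := right_special_eq Ecb RSb.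
suff /le_y : uniq [seq factor y i n.+1 | i <- [:: ea, eb & ps]] by rewrite /= size_ps ltnn.
rewrite /= inE negb_or uniq_factor_succ //.
have [-> ->] : factor y ea n.+1 \notin [seq factor y i n.+1 | i <- ps] /\
               factor y eb n.+1 \notin [seq factor y i n.+1 | i <- ps].
  by split; [apply: (factor_extend_notin Ups ca_ps Eea) |
             apply: (factor_extend_notin Ups cb_ps Eeb)].
rewrite !andbT !factor_rcons; apply: contra ne_ab => /eqP/rcons_inj[].
by rewrite Eea Eeb Eca Ecb => ->.
Qed.

Lemma distinct_factors_after N n : exists ps,
  [/\ size ps = n.+1, all (leq N) ps & uniq [seq factor y i n | i <- ps]].
Proof.
elim: n => [|n [ps [size_ps Nps Ups]]]; first by exists [:: N]; rewrite /= leqnn.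
have [a [b [Na Nb Eab ne_ab]]] := right_special_after N n.
have [c cps Eca] := factor_covered a size_ps Ups.
have [e [Ne Eec ne_ec]] : exists e, [/\ N <= e, factor y e n = factor y c n
                                      & y (e + n) != y (c + n)].
  case: (eqVneq (y (a + n)) (y (c + n))) => [Eac|]; last by exists a; rewrite Eca.
  by exists b; rewrite -Eab Eca -Eac eq_sym.
exists (e :: ps); split; rewrite /= ?size_ps ?Ne //.
by rewrite uniq_factor_succ // (factor_extend_notin Ups cps Eec ne_ec).
Qed.

Lemma factor_recurrent N n a : exists2 b, N <= b & factor y b n = factor y a n.
Proof.
have [ps [size_ps Nps Ups]] := distinct_factors_after N n.
have [b bps Eba] := factor_covered a size_ps Ups.
by exists b => //; apply: (allP Nps).
Qed.

End ComplexitySucc.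

Section HittingTime.
Variables (T : eqType) (y : infword T).
Hypothesis hy : complexity_succ y.
Variables (n q : nat).
Hypothesis q_special : right_special y n q.
Local Notation r := (factor y q n).

Lemma next_letter_unique f f' :
  factor y f n = factor y f' n -> factor y f n != r -> y (f + n) = y (f' + n).
Proof.
move=> Eff' ne_fr; apply/eqP/negPn/negP => ne_next; move/eqP: ne_fr; apply.
by apply: (right_special_unique hy) q_special; exists f'; rewrite // eq_sym.
Qed.

Lemma factor_shift_eq a b S :
  factor y a n = factor y b n -> (forall s, s < S -> factor y (a + s) n != r) ->
  factor y (a + S) n = factor y (b + S) n.
Proof.
move=> Eab; elim: S => [|S IHS] not_r; first by rewrite !addn0.
have Eab_S := IHS (fun s lt_sS => not_r s (ltnW lt_sS)).
by rewrite !addnS; apply: eq_factor_next; rewrite // (next_letter_unique Eab_S) ?not_r.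
Qed.

Lemma hit_exists a : exists t, factor y (a + t) n == r.
Proof. by have [b ab Eb] := factor_recurrent hy a n q; exists (b - a); rewrite subnKC ?Eb. Qed.

Definition hit a := ex_minn (hit_exists a).

Lemma factor_hit a : factor y (a + hit a) n = r.
Proof. by rewrite /hit; case: ex_minnP => t /eqP. Qed.

Lemma hit_min a t : factor y (a + t) n = r -> hit a <= t.
Proof. by rewrite /hit; case: ex_minnP => t' _ min_t' /eqP /min_t'. Qed.

Lemma factor_before_hit a s : s < hit a -> factor y (a + s) n != r.
Proof. by move=> lt_s_hit; apply/eqP => /hit_min; rewrite leqNgt lt_s_hit. Qed.

Lemma factor_shift_hit a b s :
  factor y a n = factor y b n -> s <= hit a -> factor y (a + s) n = factor y (b + s) n.
Proof.
by move=> Eab le_s_hit; apply: factor_shift_eq => // s' lt_s's; apply: factor_before_hit; lia.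
Qed.

Lemma hit_eq a b : factor y a n = factor y b n -> hit a = hit b.
Proof.
move=> Eab; apply/eqP; rewrite eqn_leq !hit_min //.
  by rewrite -(factor_shift_hit Eab) ?factor_hit.
by rewrite -(factor_shift_hit (esym Eab)) ?factor_hit.
Qed.

Lemma hit_addn a s : s <= hit a -> hit (a + s) = hit a - s.
Proof.
move=> le_s_hit; apply/eqP; rewrite eqn_leq hit_min -?addnA ?subnKC ?factor_hit //=.
rewrite leqNgt; apply/negP => lt_hit; move: (factor_hit (a + s)); rewrite -addnA.
by apply/eqP/factor_before_hit; lia.
Qed.

Lemma uniq_factors_to_hit a : uniq [seq factor y i n | i <- iota a (hit a).+1].
Proof.
apply: contraT => /pigeonhole_iota[i [j [ai ij ja Eij]]].
have before_hit s : a <= s < a + hit a -> factor y s n != r.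
  by case/andP=> as_ sa; rewrite -(subnKC as_) factor_before_hit //; lia.
have := @factor_shift_eq i j (a + hit a - j) Eij; rewrite subnKC; last by lia.
rewrite factor_hit => Ei.
have /before_hit/negP[] : a <= i + (a + hit a - j) < a + hit a by lia.
by apply/eqP/Ei => s lt_s; apply: before_hit; lia.
Qed.

Lemma hit_le a : hit a <= n.
Proof. by have [le_y _] := hy n; have := le_y _ (uniq_factors_to_hit a); rewrite size_iota. Qed.

Definition on_path a f := exists2 i, i <= hit a & factor y f n = factor y (a + i) n.

Lemma on_path_start a : on_path a a.
Proof. by exists 0; rewrite ?addn0. Qed.

Lemma on_path_succ a f : on_path a f -> factor y f n != r -> on_path a f.+1.
Proof.
move=> [i le_i_hit Efi] ne_fr.
have lt_i_hit : i < hit a.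
  by rewrite ltn_neqAle le_i_hit andbT; apply: contra ne_fr => /eqP Ei; rewrite Efi Ei factor_hit.
exists i.+1 => //; rewrite addnS; apply: eq_factor_next => //.
exact: next_letter_unique.
Qed.

End HittingTime.

Definition weight (z : infword bool) a n := count id (factor z a n).

Definition balanced (z : infword bool) :=
  forall L a b, weight z a L <= (weight z b L).+1.

Section Weight.
Variable z : infword bool.

Lemma weightD a m n : weight z a (m + n) = weight z a m + weight z (a + m) n.
Proof. by rewrite /weight factorD count_cat. Qed.

Lemma weightS a n : weight z a n.+1 = weight z a n + z (a + n).
Proof. by rewrite /weight factor_rcons -cats1 count_cat /= addn0. Qed.

Lemma weight1 a : weight z a 1 = z a.
Proof. by rewrite weightS /weight /= addn0. Qed.

Lemma weight_le a n : weight z a n <= n.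
Proof. by rewrite /weight -{2}(size_factor z a n) count_size. Qed.

Lemma eq_weight a b n : factor z a n = factor z b n -> weight z a n = weight z b n.
Proof. by rewrite /weight => ->. Qed.

Lemma weight_rotate a s t :
  s <= t -> (forall i, i < s -> z (a + t + i) = z (a + i)) ->
  weight z (a + s) t = weight z a t.
Proof.
move=> le_st per; have E1 := weightD (a + s) (t - s) s; have E2 := weightD a s (t - s).
rewrite subnK // -addnA subnKC // in E1; rewrite subnKC // in E2.
by rewrite E1 E2 addnC (@eq_weight (a + t) a) //; apply/eq_factorP.
Qed.

Lemma weight_sum a n : weight z a n = \sum_(i < n) z (a + i).
Proof. by elim: n => [|n IHn]; rewrite ?big_ord0 // weightS big_ord_recr IHn. Qed.

Lemma weight_mul_le a L K c :
  (forall i, i < K -> weight z (a + i * L) L <= c) -> weight z a (K * L) <= K * c.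
Proof.
elim: K => [|K IHK] le_c; first by rewrite !mul0n /weight.
rewrite mulSnr weightD mulSnr leq_add ?le_c ?IHK // => i lt_iK.
by apply: le_c; apply: ltnW.
Qed.

Lemma weight_sum_exchange M t :
  \sum_(q < M) weight z q t = \sum_(s < t) weight z s M.
Proof.
under eq_bigr => q _ do rewrite weight_sum.
rewrite exchange_big /=; apply: eq_bigr => s _.
by rewrite weight_sum; apply: eq_bigr => q _; rewrite addnC.
Qed.

Lemma weight_slide q t :
  weight z q.+1 t = weight z q t -> z (q + t) = z q.
Proof.
move=> Eslide; have := weightD q 1 t; rewrite add1n weightS weight1 addn1 Eslide addnC.
by move/addIn; case: (z (q + t)); case: (z q).
Qed.

Lemma weight_shift_repeat p d m i :
  factor z p m = factor z (p + d) m -> i <= m -> weight z (p + i) d = weight z p d.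
Proof.
move=> rep le_im; have := weightD p i d; have := weightD p d i.
have -> : weight z (p + d) i = weight z p i.
  by apply: eq_weight; rewrite -(take_factor _ _ le_im) -rep take_factor.
by rewrite addnC => ->; lia.
Qed.

End Weight.

Lemma weight_negb (z : infword bool) a L :
  weight (fun i => ~~ z i) a L = L - weight z a L.
Proof.
elim: L => [|L IHL]; rewrite ?weightS ?IHL //=.
by have := weight_le z a L; case: (z (a + L)) => /=; lia.
Qed.

Lemma leq_sum_ord_widen (f : nat -> nat) m n :
  m <= n -> \sum_(i < m) f i <= \sum_(i < n) f i.
Proof.
move=> le_mn; rewrite (big_ord_widen _ _ le_mn) big_mkcond /=.
by apply: leq_sum => i _; case: ifP.
Qed.

Lemma eventually_zero_of_bounded_sums (f : nat -> nat) B :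
  (forall M, \sum_(q < M) f q <= B) -> exists P, forall q, P <= q -> f q = 0.
Proof.
move=> bounded; apply: NNPP => not_ev.
have grow j : exists M, j <= \sum_(q < M) f q.
  elim: j => [|j [M le_jM]]; first by exists 0.
  have [q Mq fq_gt0] : exists2 q, M <= q & 0 < f q.
    apply: NNPP => none; apply: not_ev; exists M => q Mq; apply/eqP; rewrite -leqn0 leqNgt.
    by apply/negP => fq_gt0; apply: none; exists q.
  exists q.+1; rewrite big_ord_recr /= -addn1 leq_add //.
  exact: leq_trans le_jM (leq_sum_ord_widen f Mq).
by have [M le_BM] := grow B.+1; have := bounded M; lia.
Qed.

(* [r] is the unique right special factor of length [n.+1]; the factor at [p] is [r] with
   its first letter changed and is followed by the letter that does not follow [r] at [q].
   The walk from [q.+1] back to [r] then visits every factor of length [n.+1], so it has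
   length [n.+2] and [z] is [n.+2]-periodic along it. *)
Section SpecialWindows.
Variables (z : infword bool) (n p q : nat).
Hypothesis hz : complexity_succ z.
Hypothesis q_special : right_special z n.+1 q.
Hypothesis tail_pq : factor z p.+1 n = factor z q.+1 n.
Hypothesis head_pq : z p != z q.
Hypothesis next_pq : z (p + n.+1) != z (q + n.+1).
Local Notation r := (factor z q n.+1).
Local Notation hit := (hit hz n.+1 q).
Local Notation on_path := (on_path hz n.+1 q).

Lemma factor_p_neq_r : factor z p n.+1 != r.
Proof. by rewrite !factor_cons; apply: contra head_pq => /eqP[->]. Qed.

Lemma next_letter_p f : factor z f n.+1 = factor z p n.+1 -> z (f + n.+1) = z (p + n.+1).
Proof. by move=> Efp; apply: (next_letter_unique hz q_special Efp); rewrite Efp factor_p_neq_r. Qed.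

Lemma special_successor f :
  factor z f n.+1 = r -> on_path q.+1 f.+1 \/ on_path p.+1 f.+1.
Proof.
move=> Efr; case: (eqVneq (z (f + n.+1)) (z (q + n.+1))) => [Enext|ne_next].
  by left; exists 0; rewrite ?addn0 //; apply: eq_factor_next.
right; exists 0; rewrite ?addn0 //; apply/eq_factor_rcons; split.
  by rewrite (eq_factor_behead Efr) tail_pq.
rewrite !addSnnS; move: ne_next next_pq.
by case: (z (f + n.+1)); case: (z (p + n.+1)); case: (z (q + n.+1)).
Qed.

Lemma on_paths_succ f :
  on_path q.+1 f \/ on_path p.+1 f -> on_path q.+1 f.+1 \/ on_path p.+1 f.+1.
Proof.
case: (eqVneq (factor z f n.+1) r) => [/special_successor // | ne_fr].
by case=> [on_q|on_p]; [left | right]; apply: (on_path_succ q_special).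
Qed.

Lemma on_paths a : on_path q.+1 a \/ on_path p.+1 a.
Proof.
have [b qb Eba] := factor_recurrent hz q.+1 n.+1 a.
have on_b d : on_path q.+1 (q.+1 + d) \/ on_path p.+1 (q.+1 + d).
  elim: d => [|d IHd]; first by rewrite addn0; left; apply: on_path_start.
  by rewrite addnS; apply: on_paths_succ.
case: (on_b (b - q.+1)); rewrite subnKC // => -[i le_i E]; [left | right];
  by exists i; rewrite // -E -Eba.
Qed.

Lemma p_off_path : ~ on_path p.+1 p.
Proof.
case=> s le_s_hit Eps.
have Eps1 : factor z (p.+1 + s).+1 n.+1 = factor z p.+1 n.+1.
  by apply: eq_factor_next; rewrite // next_letter_p.
have lt_s_hit : s < hit p.+1.
  rewrite ltn_neqAle le_s_hit andbT; apply: contra factor_p_neq_r => /eqP Es.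
  by rewrite Eps Es (factor_hit hz).
have := hit_eq hz q_special Eps1; rewrite -addnS hit_addn //; lia.
Qed.

Lemma p_on_path : exists2 j, j < hit q.+1 & factor z (q.+1 + j) n.+1 = factor z p n.+1.
Proof.
case: (on_paths p) => [[j le_j_hit Epj]|/p_off_path//]; exists j => //.
rewrite ltn_neqAle le_j_hit andbT; apply: contra factor_p_neq_r => /eqP Ej.
by rewrite Epj Ej (factor_hit hz).
Qed.

Lemma on_path_q a : on_path q.+1 a.
Proof.
case: (on_paths a) => // -[s le_s_hit Eas].
have [j lt_j_hit Ejp] := p_on_path.
have Ej1 : factor z (q.+1 + j).+1 n.+1 = factor z p.+1 n.+1.
  by apply: eq_factor_next; rewrite // next_letter_p.
have hit_p1 : hit p.+1 = hit q.+1 - j.+1.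
  by rewrite -(hit_eq hz q_special Ej1) -addnS hit_addn.
exists (j.+1 + s); first by lia.
by rewrite Eas (factor_shift_hit q_special (esym Ej1)) // addnA addnS.
Qed.

Lemma hit_special : hit q.+1 = n.+1.
Proof.
apply/eqP; rewrite eqn_leq (hit_le hz q_special) /=.
have [_ [ps size_ps Ups]] := hz n.+1.
have : size [seq factor z i n.+1 | i <- ps] <=
       size [seq factor z i n.+1 | i <- iota q.+1 (hit q.+1).+1].
  apply: uniq_leq_size => // _ /mapP[a _ ->].
  have [i le_i_hit ->] := on_path_q a.
  by apply/mapP; exists (q.+1 + i); rewrite // mem_iota leq_addr ltn_add2l ltnS.
by rewrite !size_map size_ps size_iota.
Qed.

Lemma weight_special_windows : weight z p n.+2 = weight z q n.+2.
Proof.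
have [j lt_j_hit Ejp] := p_on_path; rewrite hit_special in lt_j_hit.
have per i : i < j.+1 -> z (q + n.+2 + i) = z (q + i).
  move=> lt_ij; have /eq_factorP := factor_hit hz n.+1 q q.+1.
  by rewrite hit_special addSnnS => ->; lia.
transitivity (weight z (q + j.+1) n.+2); last by apply: weight_rotate => //; lia.
rewrite addnS -addSn in Ejp *; apply/esym/eq_weight/eq_factor_rcons.
by rewrite Ejp next_letter_p.
Qed.

End SpecialWindows.

Lemma minimal_unbalanced (z : infword bool) L a b :
  (forall m, m < L -> forall a' b', weight z a' m <= (weight z b' m).+1) ->
  (weight z b L).+1 < weight z a L ->
  exists n, [/\ L = n.+2, z a && ~~ z b, factor z a.+1 n = factor z b.+1 n
              & z (a + n.+1) && ~~ z (b + n.+1)].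
Proof.
move=> bal_lt unbal.
have mid i : 0 < i < L -> weight z a i = (weight z b i).+1.
  case/andP=> i_gt0 lt_iL; have := weightD z a i (L - i); have := weightD z b i (L - i).
  have := bal_lt (L - i) ltac:(lia) (a + i) (b + i); have := bal_lt i lt_iL a b.
  by rewrite subnKC ?(ltnW lt_iL) //; lia.
case: L bal_lt unbal mid => [|[|n]] bal_lt unbal mid.
- by move: unbal; rewrite /weight.
- by move: unbal; rewrite !weight1; case: (z a); case: (z b).
have := mid 1 isT; rewrite !weight1 => zab.
have := mid n.+1 ltac:(lia); move: unbal; rewrite !(weightS z _ n.+1) => unbal W.
exists n; split => //; first by move: zab; case: (z a); case: (z b).
  apply/eq_factorP => i lt_in; rewrite !addSnnS.
  have := mid i.+1 ltac:(lia); have := mid i.+2 ltac:(lia); rewrite !(weightS z _ i.+1).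
  by case: (z (a + i.+1)); case: (z (b + i.+1)) => /=; lia.
by move: unbal; rewrite W; case: (z (a + n.+1)); case: (z (b + n.+1)) => /=; lia.
Qed.

Lemma complexity_succ_balanced (z : infword bool) :
  complexity_succ z -> balanced z.
Proof.
move=> hz L; elim/ltn_ind: L => L bal_lt a b; rewrite leqNgt; apply/negP => unbal.
have [n [_ /andP[za zb] Etail /andP[za_n zb_n]]] := minimal_unbalanced bal_lt unbal.
have head_ba : z b != z a by rewrite za (negbTE zb).
have next_ba : z (b + n.+1) != z (a + n.+1) by rewrite za_n (negbTE zb_n).
have Wab : weight z a n.+2 = (weight z b n.+2).+2.
  rewrite /weight !(factor_cons _ _ n.+1) !(factor_rcons _ _ n) -!cats1 /= !count_cat /=.
  by rewrite Etail !addSnnS za (negbTE zb) za_n (negbTE zb_n); lia.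
have [c [c' [_ _ Ecc' ne_cc']]] := right_special_after hz 0 n.+1.
have Ec1 : factor z c.+1 n = factor z a.+1 n.
  apply: (right_special_unique hz).
    by exists c'.+1; rewrite ?(eq_factor_behead Ecc') // !addSnnS eq_sym.
  by exists b.+1; rewrite // !addSnnS.
have c_special : right_special z n.+1 c by exists c'; rewrite // eq_sym.
case: (eqVneq (z c) (z a)) => [Eca | ne_ca].
  have a_special : right_special z n.+1 a.
    by apply: right_special_eq c_special; rewrite !factor_cons Eca Ec1.
  by have := weight_special_windows hz a_special (esym Etail) head_ba next_ba; lia.
have b_special : right_special z n.+1 b.
  apply: right_special_eq c_special; rewrite !factor_cons Ec1 Etail.
  by move: ne_ca zb; rewrite za; case: (z c); case: (z b).
have head_ab : z a != z b by rewrite eq_sym.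
have next_ab : z (a + n.+1) != z (b + n.+1) by rewrite eq_sym.
by have := weight_special_windows hz b_special Etail head_ab next_ab; lia.
Qed.

Definition distinct_blocks (T : eqType) (y : infword T) k m :=
  forall j a b, a < b < k -> factor y (j + a * m) m != factor y (j + b * m) m.

Lemma distinct_blocks_pattern (T1 T2 : eqType) (y1 : infword T1) (y2 : infword T2) k m :
  same_pattern y1 y2 -> distinct_blocks y1 k m -> distinct_blocks y2 k m.
Proof.
move=> /eq_factor_pattern y12 dist j a b ab; apply: contra (dist j a b ab).
by move/eqP/y12/eqP.
Qed.

Lemma anti_power_of_distinct_blocks (T : eqType) (y : infword T) k m j :
  0 < m -> distinct_blocks y k m -> anti_power k (factor y j (k * m)).
Proof.
move=> m_gt0 dist; exists m; split; rewrite ?size_factor //.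
have block i : i < k -> take m (drop (i * m) (factor y j (k * m))) = factor y (j + i * m) m.
  by move=> lt_ik; rewrite drop_factor take_factor // -mulnBl leq_pmull // subn_gt0.
rewrite map_inj_in_uniq ?iota_uniq // => a b; rewrite !mem_iota !add0n => /andP[_ ak] /andP[_ bk].
rewrite !block // => Eab; case: (ltngtP a b) => // [lt_ab | lt_ba].
  by move: (dist j a b); rewrite lt_ab bk Eab eqxx => /(_ isT).
by move: (dist j b a); rewrite lt_ba ak Eab eqxx => /(_ isT).
Qed.

Open Scope R_scope.

Lemma Rabs_le_bounds x a : Rabs x <= a -> - a <= x <= a.
Proof. by rewrite /Rabs; case: Rcase_abs => ? ?; lra. Qed.

Definition has_slope (z : infword bool) (alpha : R) :=
  forall a L, Rabs (INR (weight z a L) - INR L * alpha) <= 1.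

Lemma weight_mul_ge (z : infword bool) a L K r :
  (forall a', r * INR L <= INR (weight z a' L)) ->
  INR K * (r * INR L) <= INR (weight z a (K * L)).
Proof.
move=> ge_r; elim: K a => [|K IHK] a; first by rewrite Rmult_0_l; apply: pos_INR.
by rewrite mulSn weightD plus_INR S_INR; have := IHK (a + L)%nat; have := ge_r a; lra.
Qed.

Lemma balanced_slope (z : infword bool) : balanced z -> exists alpha, has_slope z alpha.
Proof.
move=> bal.
pose E r := exists2 L, (0 < L)%N & forall a, r * INR L <= INR (weight z a L).
have E_bound : bound E.
  exists 1 => r [L L_gt0 ge_r]; have := ge_r 0%nat; have := le_INR _ _ (leP (weight_le z 0 L)).
  have : 0 < INR L by apply/lt_0_INR/ltP.
  by move=> L_pos; nra.
have E_inhabited : exists r, E r.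
  by exists 0, 1%nat => // a; rewrite Rmult_0_l; apply: pos_INR.
have [alpha [alpha_ub alpha_lub]] := completeness E E_bound E_inhabited.
exists alpha => a L; case: (posnP L) => [->|L_gt0].
  by rewrite /weight /= Rmult_0_l Rminus_0_r Rabs_R0; lra.
have L_pos : 0 < INR L by apply/lt_0_INR/ltP.
have div_mul x : x / INR L * INR L = x by field; lra.
set c := INR (weight z a L); apply: Rabs_le; split; last first.
  suff /alpha_ub/(Rmult_le_compat_r _ _ _ (Rlt_le _ _ L_pos)) : E ((c - 1) / INR L).
    by rewrite div_mul => ?; lra.
  exists L => // a'; have := le_INR _ _ (leP (bal L a a')).
  by rewrite div_mul S_INR /c; lra.
suff /(Rmult_le_compat_r _ _ _ (Rlt_le _ _ L_pos)) : alpha <= (c + 1) / INR L.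
  by rewrite div_mul => ?; lra.
apply: alpha_lub => r [L' L'_gt0 ge_r]; have L'_pos : 0 < INR L' by apply/lt_0_INR/ltP.
have low := weight_mul_ge 0 L ge_r.
have up := le_INR _ _ (leP (weight_mul_le (a := 0%nat) (L := L) (K := L')
  (c := (weight z a L).+1) (fun i _ => bal L _ a))).
rewrite mult_INR S_INR mulnC -/c in up.
apply: (Rmult_le_reg_r (INR L)) => //; rewrite div_mul.
by apply: (Rmult_le_reg_r (INR L')) => //; nra.
Qed.

Lemma has_slope_negb (z : infword bool) alpha :
  has_slope z alpha -> has_slope (fun i => ~~ z i) (1 - alpha).
Proof.
move=> slope_z a L; rewrite weight_negb minus_INR; last exact/leP/weight_le.
by have := Rabs_le_bounds (slope_z a L) => ?; apply: Rabs_le; lra.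
Qed.

(* The deficits [N - weight z q t], [q < K t], add up to at most [t] by double counting, so
   they eventually vanish and consecutive windows of length [t] have equal weights. *)
Lemma eventually_periodic_of_slope (z : infword bool) alpha t N :
  has_slope z alpha -> (0 < t)%N -> INR t * alpha = INR N ->
  (forall q, weight z q t <= N)%N -> eventually_periodic z.
Proof.
move=> slope_z t_gt0 tN le_N.
have low q K : (K * N <= weight z q (K * t) + 1)%N.
  have [lo _] := Rabs_le_bounds (slope_z q (K * t)%nat).
  rewrite mult_INR Rmult_assoc tN in lo.
  by apply/leP/INR_le; rewrite plus_INR !mult_INR /=; lra.
pose D q := (N - weight z q t)%N.
have sum_const n c : (\sum_(i < n) c = c * n)%N by rewrite big_const_ord iter_addn_0.
have sumD K : (\sum_(q < K * t) D q <= t)%N.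
  set S := \sum_(q < K * t) weight z q t.
  have split_N : (\sum_(q < K * t) D q + S = N * (K * t))%N.
    by rewrite -(sum_const (K * t)%N N) -big_split; apply: eq_bigr => q _; rewrite /= subnK.
  have ge_S : ((K * N) * t <= S + t)%N.
    rewrite /S weight_sum_exchange -(sum_const t (K * N)%N).
    apply: (@leq_trans (\sum_(s < t) (weight z s (K * t) + 1))%N).
      by apply: leq_sum => s _; apply: low.
    by rewrite big_split /= sum_const mul1n.
  nia.
have [P zeroD] : exists P, forall q, (P <= q)%N -> D q = 0%N.
  apply: (@eventually_zero_of_bounded_sums _ t) => M.
  by apply: leq_trans (sumD M); apply: leq_sum_ord_widen; rewrite leq_pmulr.
exists P, t; split=> // i Pi; apply: weight_slide.
have := zeroD i Pi; have := zeroD i.+1 (leqW Pi); rewrite /D.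
by have := le_N i; have := le_N i.+1; lia.
Qed.

Lemma slope_irrational (z : infword bool) alpha t N :
  ~ eventually_periodic z -> balanced z -> has_slope z alpha -> (0 < t)%N ->
  INR t * alpha <> INR N.
Proof.
move=> aper bal slope_z t_gt0 tN; apply: aper.
case: (classic (exists q0, weight z q0 t < N)%N) => [[q0 lt_q0] | no_lt].
  by apply: (eventually_periodic_of_slope slope_z t_gt0 tN) => q; have := bal t q q0; lia.
have ge_N q : (N <= weight z q t)%N by rewrite leqNgt; apply/negP => lt_qN; apply: no_lt; exists q.
have le_Nt : (N <= t)%N by have := ge_N 0%nat; have := weight_le z 0 t; lia.
have neg_tN : INR t * (1 - alpha) = INR (t - N) by rewrite minus_INR; [lra | apply/leP].
have neg_le q : (weight (fun i => ~~ z i) q t <= t - N)%N.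
  by rewrite weight_negb; have := ge_N q; lia.
have [P [d [d_gt0 per]]] :=
  eventually_periodic_of_slope (has_slope_negb slope_z) t_gt0 neg_tN neg_le.
by exists P, d; split=> // i Pi; apply: negb_inj; apply: per.
Qed.

Definition discrepancy (z : infword bool) alpha n := INR (weight z 0 n) - INR n * alpha.

Lemma discrepancyD (z : infword bool) alpha a L :
  discrepancy z alpha (a + L) - discrepancy z alpha a = INR (weight z a L) - INR L * alpha.
Proof. by rewrite /discrepancy weightD add0n !plus_INR; ring. Qed.

Lemma discrepancy_close (z : infword bool) alpha a b : has_slope z alpha ->
  Rabs (discrepancy z alpha a - discrepancy z alpha b) <= 1.
Proof.
move=> slope_z; case: (leqP a b) => [/subnKC <-|/ltnW/subnKC <-].
  by rewrite Rabs_minus_sym discrepancyD.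
by rewrite discrepancyD.
Qed.

Lemma nat_floor_subproof (v : R) : exists k : nat, if Rlt_dec v (INR k.+1) then true else false.
Proof.
have [k lt_vk] := INR_unbounded v; exists k.
by case: Rlt_dec => // not_lt; exfalso; apply: not_lt; rewrite S_INR; lra.
Qed.

Definition nat_floor (v : R) : nat := ex_minn (nat_floor_subproof v).

Lemma nat_floorP v : 0 <= v -> INR (nat_floor v) <= v < INR (nat_floor v) + 1.
Proof.
rewrite /nat_floor; case: ex_minnP => k; case: Rlt_dec => // lt_vk _ min_k v_ge0.
rewrite -S_INR; split=> //; case: k lt_vk min_k => [|k] lt_vk min_k; first by rewrite /=; lra.
apply: Rnot_lt_le => lt_vk'; have := min_k k; case: Rlt_dec => // _ /(_ isT).
by rewrite ltnn.
Qed.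

(* Pigeonhole on discrepancies rather than on fractional parts of [i alpha]: the difference
   of the discrepancies at [i + t] and [i] is [t alpha] up to the integer [weight z i t]. *)
Lemma dirichlet_slope (z : infword bool) alpha e : has_slope z alpha -> 0 < e ->
  exists t c, [/\ (0 < t)%N, (c <= t)%N & Rabs (INR t * alpha - INR c) < e].
Proof.
move=> slope_z e_pos; have [M lt_M] := INR_archimed e 1 e_pos.
pose g := discrepancy z alpha; pose f i := nat_floor ((g i - g 0%nat + 1) * INR M).
have v_bounds i : 0 <= (g i - g 0%nat + 1) * INR M <= 2 * INR M.
  move: (Rabs_le_bounds (discrepancy_close i 0 slope_z)) (pos_INR M); rewrite /g => ? ?.
  by split; nra.
have [i [j [_ ij _ Efij]]] : exists i j, [/\ (0 <= i)%N, (i < j)%N, (j < 0 + (M + M).+2)%N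
                                           & f i = f j].
  apply: pigeonhole_iota; apply/negP => Uf.
  have sub : {subset [seq f i | i <- iota 0 (M + M).+2] <= iota 0 (M + M).+1}.
    move=> _ /mapP[i _ ->]; rewrite mem_iota add0n; apply/ltP/INR_lt.
    have [le_f _] := nat_floorP (proj1 (v_bounds i)).
    by rewrite /f S_INR plus_INR; have := v_bounds i; lra.
  by have := uniq_leq_size Uf sub; rewrite size_map !size_iota ltnn.
have [fi_le lt_fi] := nat_floorP (proj1 (v_bounds i)).
have [fj_le lt_fj] := nat_floorP (proj1 (v_bounds j)).
rewrite -/(f i) Efij in fi_le lt_fi; rewrite -/(f j) in fj_le lt_fj.
have close : Rabs (g j - g i) < e.
  apply: Rabs_def1; apply: (Rmult_lt_reg_r (INR M)); nra.
exists (j - i)%nat, (weight z i (j - i)); split; rewrite ?subn_gt0 ?weight_le //.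
by move: close; rewrite /g -{1}(subnKC (ltnW ij)) discrepancyD Rabs_minus_sym.
Qed.

(* Some window of length [t] in the first [K t] letters has weight [c + 1], raising the
   discrepancy by at least [1 - (t alpha - c)]; the windows of length [d] at its two ends
   have the same weight, so the oscillation bound 1 pins their discrepancy. *)
Lemma repeat_discrepancy (z : infword bool) alpha t c K m p d :
  has_slope z alpha -> INR c < INR t * alpha ->
  1 < INR K * (INR t * alpha - INR c) -> (K * t <= m)%N ->
  factor z p m = factor z (p + d) m ->
  Rabs (INR (weight z p d) - INR d * alpha) <= INR t * alpha - INR c.
Proof.
move=> slope_z lt_ct K_large le_Ktm rep.
have [i lt_iK heavy] : exists2 i, (i < K)%N & (c < weight z (p + i * t) t)%N.
  case: (boolP (has (fun i => c < weight z (p + i * t) t)%N (iota 0 K))) => [/hasP[i]|/hasPn light].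
    by rewrite mem_iota => /andP[_ lt_iK] heavy; exists i.
  have le_c i : (i < K)%N -> (weight z (p + i * t) t <= c)%N.
    by move=> lt_iK; rewrite leqNgt light // mem_iota.
  have hi := le_INR _ _ (leP (weight_mul_le le_c)).
  have [lo _] := Rabs_le_bounds (slope_z p (K * t)%N).
  by rewrite !mult_INR in lo hi; nra.
have le_step : (i * t + t <= m)%N by rewrite -mulSnr (leq_trans _ le_Ktm) // leq_mul2r lt_iK orbT.
pose q := (p + i * t)%N.
have w_q : weight z q d = weight z p d.
  by apply: weight_shift_repeat rep _; apply: leq_trans (leq_addr _ _) le_step.
have w_qt : weight z (q + t) d = weight z p d by rewrite -addnA; apply: weight_shift_repeat rep _.
have heavy_R : INR c + 1 <= INR (weight z q t) by rewrite -S_INR; apply/le_INR/leP.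
have g_t := discrepancyD z alpha q t.
have g_d := discrepancyD z alpha q d; have g_td := discrepancyD z alpha (q + t) d.
have [lo1 hi1] := Rabs_le_bounds (discrepancy_close (q + t + d) q slope_z).
have [lo2 hi2] := Rabs_le_bounds (discrepancy_close (q + t) (q + d) slope_z).
rewrite w_q in g_d; rewrite w_qt in g_td; apply: Rabs_le; lra.
Qed.

Lemma multiple_in_window th w L0 j0 : 0 < th < w -> INR j0 * th < L0 ->
  exists j, (j0 < j)%N /\ L0 <= INR j * th < L0 + w.
Proof.
move=> [th_pos lt_thw] lt_j0.
set u := L0 / th; have L0E : L0 = u * th by rewrite /u; field; lra.
have u_ge0 : 0 <= u by have := pos_INR j0; nra.
have [le_fl lt_fl] := nat_floorP u_ge0.
exists (nat_floor u).+1; rewrite S_INR; split; last by nra.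
by apply/ltP/INR_lt; rewrite S_INR; nra.
Qed.

Lemma block_length alpha t c K e : 0 < INR t * alpha - INR c < e ->
  exists m N, (K * t <= m)%N /\ e <= INR m * alpha - INR N < 2 * e.
Proof.
set th := INR t * alpha - INR c => th_bounds.
have [n0 lt_n0] := INR_unbounded (INR K * th).
have [|j [lt_Kj win]] := @multiple_in_window th e (INR n0 + e) K th_bounds; first lra.
exists (j * t)%N, (j * c + n0)%N; split; first by rewrite leq_mul2r ltnW ?orbT.
have -> : INR (j * t) * alpha - INR (j * c + n0) = INR j * th - INR n0.
  by rewrite /th plus_INR !mult_INR; ring.
lra.
Qed.

Lemma gap_multiples k c' m N S e alpha : 2 * INR k * e = 1 ->
  e <= INR m * alpha - INR N < 2 * e -> (0 < c' < k)%N ->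
  e <= Rabs (INR S - INR (c' * m) * alpha).
Proof.
move=> ke dl_bounds /andP[c'_gt0 lt_c'k].
have c'_ge1 : 1 <= INR c' by apply: (le_INR 1); apply/leP.
have c'_le : INR c' + 1 <= INR k by rewrite -S_INR; apply/le_INR/leP.
set dl := INR m * alpha - INR N in dl_bounds.
have -> : INR (c' * m) * alpha = INR c' * (INR N + dl) by rewrite /dl mult_INR; ring.
case: (leqP S (c' * N)) => [le_S | lt_S].
  have := le_INR _ _ (leP le_S); rewrite mult_INR => le_S_R.
  by rewrite -Rabs_Ropp; apply: Rle_trans (Rle_abs _); nra.
have := le_INR _ _ (leP lt_S); rewrite S_INR mult_INR => lt_S_R.
apply: Rle_trans (Rle_abs _); nra.
Qed.

Lemma blocks_distinct_above (z : infword bool) alpha k t c :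
  has_slope z alpha -> (1 < k)%N -> INR c < INR t * alpha < INR c + / (2 * INR k) ->
  exists2 m, (0 < m)%N & distinct_blocks z k m.
Proof.
move=> slope_z k_gt1 [lt_ct lt_te]; set e := / (2 * INR k) in lt_te.
have k_ge2 : 2 <= INR k by apply: (le_INR 2); apply/leP.
have ke : 2 * INR k * e = 1 by rewrite /e Rinv_r; lra.
have th_bounds : 0 < INR t * alpha - INR c < e by lra.
have [K K_large] := INR_archimed _ 1 (proj1 th_bounds).
have [m [N [le_Ktm dl_bounds]]] := block_length K th_bounds.
have m_gt0 : (0 < m)%N.
  rewrite lt0n; apply/eqP => m0; move: dl_bounds; rewrite m0 INR_0 Rmult_0_l.
  by have := pos_INR N; lra.
exists m => // j a b /andP[lt_ab lt_bk]; apply/negP => /eqP.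
rewrite (_ : j + b * m = j + a * m + (b - a) * m)%N; last first.
  by rewrite -addnA -mulnDl subnKC // ltnW.
move=> /(repeat_discrepancy slope_z lt_ct K_large le_Ktm) close.
have lt_ba : (0 < b - a < k)%N by rewrite subn_gt0 lt_ab (leq_ltn_trans (leq_subr _ _) lt_bk).
by have := gap_multiples (weight z (j + a * m) ((b - a) * m)) ke dl_bounds lt_ba; lra.
Qed.

Lemma sturmian_distinct_blocks (z : infword bool) alpha k :
  complexity_succ z -> has_slope z alpha -> (1 < k)%N ->
  exists2 m, (0 < m)%N & distinct_blocks z k m.
Proof.
move=> hz slope_z k_gt1.
have k_pos : 0 < 2 * INR k by have := lt_0_INR k (ltP (ltnW k_gt1)); lra.
have [t [c [t_gt0 le_ct /Rabs_def2[hi lo]]]] := dirichlet_slope slope_z (Rinv_0_lt_compat _ k_pos).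
have irr : INR t * alpha <> INR c :=
  slope_irrational (complexity_succ_aperiodic hz) (complexity_succ_balanced hz) slope_z t_gt0.
case: (Rtotal_order (INR c) (INR t * alpha)) => [above | [/esym/irr[] | below]].
  by apply: (blocks_distinct_above (t := t) (c := c) slope_z k_gt1); lra.
have [|m m_gt0 dist] :=
  blocks_distinct_above (t := t) (c := (t - c)%N) (has_slope_negb slope_z) k_gt1.
  by rewrite minus_INR; [lra | apply/leP].
by exists m => //; apply: distinct_blocks_pattern dist => i j; split=> [/negb_inj | ->].
Qed.

Close Scope R_scope.

Theorem corollary4p12 (T : eqType) (x : infword T) :
  sturmian x ->
  forall k : nat, 1 < k ->
  forall j : nat, exists n : nat, anti_power k (factor x j n).
Proof.
move=> sx k k_gt1 j.
have hx := sturmian_complexity_succ sx.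
have xz := complexity_succ_two_letters hx.
have hz := complexity_succ_pattern xz hx.
have [alpha slope_z] := balanced_slope (complexity_succ_balanced hz).
have [m m_gt0 dist] := sturmian_distinct_blocks hz slope_z k_gt1.
exists (k * m); apply: anti_power_of_distinct_blocks m_gt0 _.
by apply: distinct_blocks_pattern dist => i i'; rewrite xz.
Qed.
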